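(* Let $p$ be a prime, let $e\geq2$ and $d\geq2$ be integers and let $\lambda\in\{1,\dots,\min(e,d-1)\}$. The map $$(\alpha_1,\dots,\alpha_d)\longmapsto (p^{\mu-\alpha_1},\dots,p^{\mu-\alpha_d}),\qquad \mu=\Big\lfloor \big(e+\textstyle\sum_{i=1}^d\alpha_i\big)/d\Big\rfloor=\big(e-\lambda+\textstyle\sum_{i=1}^d\alpha_i\big)/d,$$ is a bijection from $\mathcal R_\lambda(d,e)$ onto the set of $d$-dimensional vector-factorisations of $p^{e-\lambda}$. Its inverse is $(p^{\beta_1},\dots,p^{\beta_d})\longmapsto(B-\beta_1,\dots,B-\beta_d)$ where $B=\max(\beta_1,\dots,\beta_d)$.
   Context: $\mathbb N=\{0,1,2,\dots\}$. A $d$-dimensional vector-factorisation of $N\geq1$ is a vector $(v_1,\dots,v_d)\in\mathbb N^d$ with $v_1\cdots v_d=N$. $\mathcal R_\lambda(d,e)$ is the set of all $\alpha=(\alpha_1,\dots,\alpha_d)\in\mathbb N^d$ with $\min(\alpha_1,\dots,\alpha_d)=0$, $\max(\alpha_1,\dots,\alpha_d)\,d<e+\sum_i\alpha_i$ and $e+\sum_i\alpha_i\equiv\lambda\pmod d$. *)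

From mathcomp Require Import all_boot.
Set Implicit Arguments. Unset Strict Implicit. Unset Printing Implicit Defensive.

Definition vsum (d : nat) (a : {ffun 'I_d -> nat}) : nat := \sum_(i < d) a i.
Definition vmax (d : nat) (a : {ffun 'I_d -> nat}) : nat := \max_(i < d) a i.

(* min(a_1,...,a_d) = 0  <=>  some coordinate is 0 (entries are in N) *)
Definition inR (d e lam : nat) (a : {ffun 'I_d -> nat}) : bool :=
  [&& [exists i, a i == 0],
      vmax a * d < e + vsum a &
      (e + vsum a) %% d == lam %% d].

Definition isVF (d N : nat) (v : {ffun 'I_d -> nat}) : bool :=
  \prod_(i < d) v i == N.

Definition mu (d e : nat) (a : {ffun 'I_d -> nat}) : nat := (e + vsum a) %/ d.

Definition fmap (p d e : nat) (a : {ffun 'I_d -> nat}) : {ffun 'I_d -> nat} :=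
  [ffun i => p ^ (mu e a - a i)].

Definition gmap (p d : nat) (v : {ffun 'I_d -> nat}) : {ffun 'I_d -> nat} :=
  [ffun i => (\max_(j < d) logn p (v j)) - logn p (v i)].

From mathcomp Require Import all_boot zify.
Set Implicit Arguments. Unset Strict Implicit. Unset Printing Implicit Defensive.

(* The residue condition says exactly that [e + vsum a = mu * d + lam] with every
   [a i <= mu]; reflecting the exponents through [mu] turns this into
   [\sum_i (mu - a i) = e - lam], i.e. a factorisation of [p ^ (e - lam)].
   Conversely the exponents [b] of a factorisation satisfy
   [\sum_i (B - b i) + (e - lam) = B * d] for [B = max b], so [B] is recovered
   as the quotient [mu] of the reflected vector, and a coordinate attaining [B]
   gives the zero coordinate. *)

Lemma sum_subn_const d c (F : 'I_d -> nat) :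
  (forall i, F i <= c) -> \sum_(i < d) (c - F i) + \sum_(i < d) F i = c * d.
Proof.
move=> F_le; rewrite -big_split /= (eq_bigr (fun=> c)) => [|i _]; last exact: subnK.
by rewrite sum_nat_const card_ord mulnC.
Qed.

Lemma bigmax_subn_const d c (F : 'I_d -> nat) i0 :
  F i0 = 0 -> \max_(i < d) (c - F i) = c.
Proof.
move=> F0; apply/eqP; rewrite eqn_leq; apply/andP; split.
  by apply/bigmax_leqP => i _; rewrite leq_subr.
by apply: leq_trans (leq_bigmax i0); rewrite F0 subn0.
Qed.

Section PrimePowerFactorisations.

Variables (p n d : nat).
Hypothesis p_prime : prime p.

Lemma isVF_pfactor (v : {ffun 'I_d -> nat}) i :
  isVF (p ^ n) v -> v i = p ^ logn p (v i).
Proof.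
move=> /eqP prod_v; have : v i %| p ^ n by rewrite -prod_v (bigD1 i) //= dvdn_mulr.
by case/(dvdn_pfactor _ _ p_prime) => m _ ->; rewrite pfactorK.
Qed.

Lemma isVF_sum_logn (v : {ffun 'I_d -> nat}) :
  isVF (p ^ n) v -> \sum_(i < d) logn p (v i) = n.
Proof.
move=> vf; apply/eqP; rewrite -(eqn_exp2l _ _ (prime_gt1 p_prime)) expn_sum.
by rewrite -(eqP vf); apply/eqP/eq_bigr => i _; rewrite -isVF_pfactor.
Qed.

Lemma vsum_gmap (v : {ffun 'I_d -> nat}) :
  isVF (p ^ n) v -> vsum (gmap p v) + n = (\max_(j < d) logn p (v j)) * d.
Proof.
move=> vf; rewrite -(isVF_sum_logn vf).
rewrite -(sum_subn_const (fun i => @leq_bigmax _ (fun j => logn p (v j)) i)).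
by congr (_ + _); apply: eq_bigr => i _; rewrite ffunE.
Qed.

End PrimePowerFactorisations.

Lemma vmax_gmap p d (v : {ffun 'I_d -> nat}) :
  vmax (gmap p v) <= \max_(j < d) logn p (v j).
Proof. by apply/bigmax_leqP => i _; rewrite ffunE leq_subr. Qed.

Lemma gmap_has0 p d (v : {ffun 'I_d -> nat}) :
  0 < d -> [exists i, gmap p v i == 0].
Proof.
rewrite -[d in 0 < d]card_ord => /(eq_bigmax (fun j => logn p (v j))) [i0 max_i0].
by apply/existsP; exists i0; rewrite ffunE max_i0 subnn.
Qed.

Section ResidueVectors.

Variables (p d e lam : nat).
Hypotheses (p_prime : prime p) (lam_gt0 : 0 < lam) (lam_le_e : lam <= e)
  (lam_lt_d : lam < d).

Lemma inR_divn_eq (a : {ffun 'I_d -> nat}) :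
  inR e lam a -> e + vsum a = mu e a * d + lam.
Proof.
case/and3P => _ _ /eqP mod_eq.
by rewrite /mu {1}(divn_eq (e + vsum a) d) mod_eq modn_small.
Qed.

Lemma inR_le_mu (a : {ffun 'I_d -> nat}) i : inR e lam a -> a i <= mu e a.
Proof.
move=> aR; case/and3P: (aR) => _ max_lt _.
have ai_le : a i <= vmax a by apply: leq_bigmax.
move: max_lt; rewrite inR_divn_eq // => max_lt.
have : vmax a * d < (mu e a).+1 * d by rewrite mulSn; lia.
by rewrite ltn_pmul2r ?(leq_ltn_trans _ lam_lt_d) //; lia.
Qed.

Lemma fmap_isVF (a : {ffun 'I_d -> nat}) :
  inR e lam a -> isVF (p ^ (e - lam)) (fmap p e a).
Proof.
move=> aR; rewrite /isVF /fmap; apply/eqP.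
under eq_bigr => i _ do rewrite ffunE.
have sum_eq : \sum_(i < d) (mu e a - a i) + lam = e.
  have := sum_subn_const (fun i => inR_le_mu i aR); have := inR_divn_eq aR.
  rewrite /vsum; lia.
by rewrite -expn_sum -[in RHS]sum_eq addnK.
Qed.

Lemma gmap_fmap (a : {ffun 'I_d -> nat}) : inR e lam a -> gmap p (fmap p e a) = a.
Proof.
move=> aR; case/and3P: (aR) => /existsP [i0 /eqP a_i0] _ _.
apply/ffunP => i; rewrite !ffunE.
under eq_bigr => j _ do rewrite ffunE pfactorK //.
by rewrite pfactorK // (bigmax_subn_const _ a_i0) subKn // inR_le_mu.
Qed.

Lemma gmap_divn_eq (v : {ffun 'I_d -> nat}) : isVF (p ^ (e - lam)) v ->
  e + vsum (gmap p v) = (\max_(j < d) logn p (v j)) * d + lam.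
Proof. by move=> vf; have := vsum_gmap p_prime vf; lia. Qed.

Lemma gmap_inR (v : {ffun 'I_d -> nat}) :
  isVF (p ^ (e - lam)) v -> inR e lam (gmap p v).
Proof.
move=> vf; apply/and3P; split; first by apply: gmap_has0; lia.
  by rewrite gmap_divn_eq //; have := vmax_gmap p v; nia.
by rewrite gmap_divn_eq // modnMDl.
Qed.

Lemma mu_gmap (v : {ffun 'I_d -> nat}) :
  isVF (p ^ (e - lam)) v -> mu e (gmap p v) = \max_(j < d) logn p (v j).
Proof.
by move=> vf; rewrite /mu gmap_divn_eq // divnMDl ?divn_small ?addn0 //; lia.
Qed.

Lemma fmap_gmap (v : {ffun 'I_d -> nat}) :
  isVF (p ^ (e - lam)) v -> fmap p e (gmap p v) = v.
Proof.
move=> vf; apply/ffunP => i; rewrite !ffunE mu_gmap // subKn ?leq_bigmax //.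
by rewrite -(isVF_pfactor p_prime i vf).
Qed.

End ResidueVectors.

Theorem proposition3p2 (p e d lam : nat) :
  prime p -> 2 <= e -> 2 <= d -> 1 <= lam <= minn e d.-1 ->
  [/\ (forall a : {ffun 'I_d -> nat}, inR e lam a ->
         (e + vsum a) %/ d = (e - lam + vsum a) %/ d /\ d %| e - lam + vsum a),
      (forall a : {ffun 'I_d -> nat}, inR e lam a -> isVF (p ^ (e - lam)) (fmap p e a)),
      (forall v : {ffun 'I_d -> nat}, isVF (p ^ (e - lam)) v -> inR e lam (gmap p v)),
      (forall a : {ffun 'I_d -> nat}, inR e lam a -> gmap p (fmap p e a) = a) &
      (forall v : {ffun 'I_d -> nat}, isVF (p ^ (e - lam)) v -> fmap p e (gmap p v) = v)].
Proof.
move=> p_prime _ d_ge2 /andP[lam_gt0]; rewrite leq_min => /andP[lam_le_e lam_le_d1].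
have lam_lt_d : lam < d by lia.
split; [move=> a aR | exact: fmap_isVF | exact: gmap_inR | exact: gmap_fmap
        | exact: fmap_gmap].
have -> : e - lam + vsum a = mu e a * d by have := inR_divn_eq lam_lt_d aR; lia.
by rewrite mulnK ?dvdn_mull //; lia.
Qed.
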